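(* Let $G$ be a finite group. The poset $\widetilde\Pi(G)$ is a chain (i.e., totally ordered) if and only if $G$ is a $p$-group for some prime $p$.
   Context: For a finite group $G$ and a subgroup $H\le G$, let $\pi_e(H)=\{o(x)\mid x\in H\}$ be the set of orders of elements of $H$. Let $\mathcal{L}(G)$ denote the set of all subgroups of $G$. Define an equivalence relation $\equiv$ on $\mathcal{L}(G)$ by $H_1\equiv H_2$ if and only if $\pi_e(H_1)=\pi_e(H_2)$, and denote the class of $H$ by $[H]$. The poset $\widetilde\Pi(G)$ is the set of equivalence classes $\mathcal{L}(G)/\!\equiv$ partially ordered by $[H_1]\lesssim[H_2]$ if and only if $\pi_e(H_1)\subseteq\pi_e(H_2)$. *)

From mathcomp Require Import all_boot all_fingroup all_solvable.
Set Implicit Arguments. Unset Strict Implicit. Unset Printing Implicit Defensive.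
Local Open Scope group_scope.

Definition pi_e_pred (gT : finGroupType) (H : {set gT}) : pred nat :=
  fun n => [exists x in H, #[x] == n].

(* The poset
   Pi~(G) = L(G)/== ordered by [H1] <= [H2] iff pi_e(H1) ⊆ pi_e(H2) is a chain
   iff any two subgroups of G have comparable element-order sets. *)
Definition pi_e_le (gT : finGroupType) (H1 H2 : {set gT}) : Prop :=
  forall n, pi_e_pred H1 n -> pi_e_pred H2 n.

Definition Pi_tilde_is_chain (gT : finGroupType) (G : {group gT}) : Prop :=
  forall H1 H2 : {group gT}, H1 \subset G -> H2 \subset G ->
    pi_e_le H1 H2 \/ pi_e_le H2 H1.

From mathcomp Require Import all_boot all_fingroup all_solvable.

Set Implicit Arguments.
Unset Strict Implicit.
Unset Printing Implicit Defensive.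

(* In a nilpotent (in particular a p-) group some element has order equal to
   the exponent, so the element orders are exactly the divisors of the
   exponent; for a p-group these are the powers p^i, i <= log_p(exponent), and
   such sets form a chain.  Conversely, if p and q are primes dividing |G|, the
   comparability of cyclic subgroups of orders p and q given by Cauchy's
   theorem forces p = q. *)

Lemma pnat_dvdn_total (p m n : nat) : p.-nat m -> p.-nat n -> (m %| n) || (n %| m).
Proof.
move=> /part_pnat_id <- /part_pnat_id <-; rewrite !p_part.
by case: (leqP (logn p m) (logn p n)) => [|/ltnW] le_mn; apply/orP;
  [left | right]; apply: dvdn_exp2l.
Qed.

Lemma pnat_of_unique_prime_divisor n :
  0 < n -> (forall p q, prime p -> prime q -> p %| n -> q %| n -> p = q) ->
  exists p, prime p /\ p.-nat n.
Proof.
move=> n_gt0 uniq_pdiv; have [n_le1 | n_gt1] := leqP n 1.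
  by exists 2; rewrite (@anti_leq n 1) ?n_le1.
have pdiv_pr := pdiv_prime n_gt1; exists (pdiv n); split=> //.
apply/pnatP=> // q q_pr q_dvd_n.
by rewrite inE (uniq_pdiv q (pdiv n)) ?pdiv_dvd.
Qed.

Section ElementOrders.
Local Open Scope group_scope.

Variable gT : finGroupType.
Implicit Types (H : {group gT}) (x : gT).

Lemma pi_e_order H x : x \in H -> pi_e_pred H #[x].
Proof. by move=> xH; apply/existsP; exists x; rewrite xH eqxx. Qed.

Lemma pi_e_dvd_exponent H n : pi_e_pred H n -> n %| exponent H.
Proof. by case/existsP=> x /andP[xH /eqP <-]; apply: dvdn_exponent. Qed.

Lemma nil_pi_eE H n : nilpotent H -> pi_e_pred H n = (n %| exponent H).
Proof.
move=> nilH; apply/idP/idP; first exact: pi_e_dvd_exponent.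
case/dvdnP=> m expH; have [x xH ox] := exponent_witness nilH.
have m_dvd_x : m %| #[x] by rewrite -ox expH dvdn_mulr.
have m_gt0 : 0 < m by move: (exponent_gt0 H); rewrite expH muln_gt0 => /andP[].
by rewrite -[n](mulKn n m_gt0) -expH ox -orderXdiv // pi_e_order ?groupX.
Qed.

Lemma pgroup_pi_e_total (p : nat) H1 H2 :
  p.-group H1 -> p.-group H2 -> pi_e_le H1 H2 \/ pi_e_le H2 H1.
Proof.
move=> pH1 pH2; have nilH1 := pgroup_nil pH1; have nilH2 := pgroup_nil pH2.
rewrite -!(pnat_exponent p) in pH1 pH2.
have := pnat_dvdn_total pH1 pH2.
case/orP=> le_exp; [left | right] => n;
  rewrite !nil_pi_eE // => n_dvd; exact: dvdn_trans le_exp.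
Qed.

Lemma chain_order_dvdn_total (G : {group gT}) x y :
  Pi_tilde_is_chain G -> x \in G -> y \in G -> (#[x] %| #[y]) || (#[y] %| #[x]).
Proof.
move=> chainG xG yG; have sxG : <[x]> \subset G by rewrite cycle_subG.
have syG : <[y]> \subset G by rewrite cycle_subG.
have [le_xy | le_yx] := chainG _ _ sxG syG; apply/orP; [left | right].
- by rewrite -(exponent_cycle y) pi_e_dvd_exponent ?le_xy ?pi_e_order ?cycle_id.
- by rewrite -(exponent_cycle x) pi_e_dvd_exponent ?le_yx ?pi_e_order ?cycle_id.
Qed.

Lemma chain_prime_divisors_eq (G : {group gT}) p q :
  Pi_tilde_is_chain G -> prime p -> prime q -> p %| #|G| -> q %| #|G| -> p = q.
Proof.
move=> chainG p_pr q_pr /(Cauchy p_pr)[x xG ox] /(Cauchy q_pr)[y yG oy].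
have /orP[] := chain_order_dvdn_total chainG xG yG;
  rewrite ox oy dvdn_prime2 //; [exact: eqP | by move/eqP].
Qed.

End ElementOrders.

Theorem theorem2p1 (gT : finGroupType) (G : {group gT}) :
  Pi_tilde_is_chain G <-> exists p : nat, prime p /\ (p.-group G)%g.
Proof.
split=> [chainG | [p [_ pG]] H1 H2 sH1G sH2G].
- apply: pnat_of_unique_prime_divisor (cardG_gt0 G) _ => p q.
  exact: chain_prime_divisors_eq.
- exact: pgroup_pi_e_total (pgroupS sH1G pG) (pgroupS sH2G pG).
Qed.
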